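(* Let $(X_k^\diamond,U_k^\diamond)_{k\ge0}$ be the trajectory of $X_{k+1}=AX_k+BU_k+EW_k$, $X_0=X_{\mathrm{ini}}$, under $U_k^\diamond=KX_k^\diamond+F\,\mathbb E[W]$, and let $(\bar X_k^\diamond,\bar U_k^\diamond)_{k\ge0}$ be a corresponding stationary trajectory with law $(\mu_X^\diamond,\mu_U^\diamond)$. Then there exist constants $\beta>0$ and $p\in[0,1)$ such that for all $k\ge0$ $$\big\|(X_k^\diamond,U_k^\diamond)-(\bar X_k^\diamond,\bar U_k^\diamond)\big\|\le\beta p^k,$$ where $\|\cdot\|$ is the $\mathcal L^2$-norm $\|Z\|=\sqrt{\mathbb E[Z^\top Z]}$. Consequently, for every $\varepsilon>0$, $$\mathbb P\Big(\limsup_{k\to\infty}\big\{\|(X_k^\diamond,U_k^\diamond)-(\bar X_k^\diamond,\bar U_k^\diamond)\|_2\ge\varepsilon\big\}\Big)=0,$$ where $\|\cdot\|_2$ is the Euclidean norm applied pathwise.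
   Context: $A\in\mathbb R^{n_x\times n_x}$, $B\in\mathbb R^{n_x\times n_u}$, $E\in\mathbb R^{n_x\times n_w}$; $Q\succeq0$, $R\succ0$; $(A,B)$ stabilizable, $(A,Q^{1/2})$ detectable. $X_{\mathrm{ini}}$ square integrable; $W_0,W_1,\dots$ i.i.d. square integrable, independent of $X_{\mathrm{ini}}$, distributed as $W$. Stationary quantities: $P$ stabilizing positive semidefinite solution of $P=Q+A^\top(P-PB(R+B^\top PB)^{-1}B^\top P)A$; $K=-(R+B^\top PB)^{-1}B^\top PA$; $\tilde A=A+BK$ (Schur stable); $G$ the unique solution of $G=\tilde A^\top(PE+G)$; $F=-(R+B^\top PB)^{-1}B^\top(PE+G)$; $\tilde F=BF+E$. Let $X_\infty:=(I-\tilde A)^{-1}\tilde F\mathbb E[W]+\sum_{j=0}^\infty\tilde A^jE(W'_j-\mathbb E[W])$ for i.i.d. copies $W'_j$ of $W$, and let $(\mu_X^\diamond,\mu_U^\diamond)$ denote the joint law of $(X_\infty,KX_\infty+F\mathbb E[W])$. A corresponding stationary trajectory with law $(\mu_X^\diamond,\mu_U^\diamond)$ is a sequence of square-integrable $(\bar X_k,\bar U_k)$ with $\bar X_{k+1}=A\bar X_k+B\bar U_k+EW_k$ (driven by the same disturbances $W_k$), $\bar X_0=\bar X_{\mathrm{ini}}$ for some square-integrable $\bar X_{\mathrm{ini}}$, and $(\bar X_k,\bar U_k)$ having joint law $(\mu_X^\diamond,\mu_U^\diamond)$ for all $k$. *)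

From HB Require Import structures.
From mathcomp Require Import all_boot all_order all_algebra.
From mathcomp Require Import all_classical all_reals all_analysis.
From mathcomp Require Import complex.

Set Implicit Arguments.
Unset Strict Implicit.
Unset Printing Implicit Defensive.

Import Order.TTheory GRing.Theory Num.Theory numFieldNormedType.Exports.
Local Open Scope classical_set_scope.
Local Open Scope ring_scope.

Definition schur_stable (R : realType) (n : nat) (M : 'M[R]_n) : Prop :=
  forall z : R[i], eigenvalue (map_mx (fun x : R => Complex x 0) M) z -> `|z| < 1.

Definition stabilizable (R : realType) (n m : nat) (A : 'M[R]_n) (B : 'M[R]_(n, m)) : Prop :=
  exists L : 'M[R]_(m, n), schur_stable (A + B *m L).

Definition detectable (R : realType) (n p : nat) (A : 'M[R]_n) (C : 'M[R]_(p, n)) : Prop :=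
  exists L : 'M[R]_(n, p), schur_stable (A + L *m C).

Definition psd (R : realType) (n : nat) (M : 'M[R]_n) : Prop :=
  M^T = M /\ forall v : 'cV[R]_n, 0 <= (v^T *m M *m v) ord0 ord0.

Definition pd (R : realType) (n : nat) (M : 'M[R]_n) : Prop :=
  M^T = M /\ forall v : 'cV[R]_n, v != 0 -> 0 < (v^T *m M *m v) ord0 ord0.

Definition sqnorm (R : realType) (n : nat) (v : 'cV[R]_n) : R := (v^T *m v) ord0 ord0.

Definition rect_cV (R : realType) (n : nat) : set (set 'cV[R]_n) :=
  [set S | exists Bs : 'I_n -> set R,
     (forall i, measurable (Bs i)) /\ S = [set v | forall i, Bs i ((v : 'cV[R]_n) i ord0)]].

Definition borel_cV (R : realType) (n : nat) : set (set 'cV[R]_n) :=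
  smallest (sigma_algebra setT) (@rect_cV R n).

Definition rv_meas d (T : measurableType d) (R : realType) (n : nat)
  (Y : T -> 'cV[R]_n) : Prop :=
  forall S, @borel_cV R n S -> measurable (Y @^-1` S).

Definition sq_int d (T : measurableType d) (R : realType) (P : probability T R)
  (n : nat) (Y : T -> 'cV[R]_n) : Prop :=
  rv_meas Y /\ forall i, P.-integrable setT (fun t => ((Y t i ord0) ^+ 2)%:E).

Definition sigma_rv d (T : measurableType d) (R : realType) (n : nat)
  (Y : T -> 'cV[R]_n) : set (set T) :=
  [set Y @^-1` S | S in @borel_cV R n].

Definition mutually_indep d (T : measurableType d) (R : realType)
  (P : probability T R) (I : eqType) (F : I -> set (set T)) : Prop :=
  forall (J : seq I) (A : I -> set T), uniq J ->
    (forall j, j \in J -> F j (A j)) ->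
    P (\big[setI/setT]_(j <- J) A j) = (\prod_(j <- J) P (A j))%E.

Definition same_law d1 (T1 : measurableType d1) d2 (T2 : measurableType d2)
  (R : realType) (P1 : probability T1 R) (P2 : probability T2 R) (n : nat)
  (Y1 : T1 -> 'cV[R]_n) (Y2 : T2 -> 'cV[R]_n) : Prop :=
  forall S, @borel_cV R n S -> P1 (Y1 @^-1` S) = P2 (Y2 @^-1` S).

Definition mean d (T : measurableType d) (R : realType) (P : probability T R)
  (n : nat) (Y : T -> 'cV[R]_n) : 'cV[R]_n :=
  \col_i fine ('E_P[fun t => Y t i ord0]).

Definition gainK (R : realType) (nx nu : nat) (A : 'M[R]_nx) (B : 'M[R]_(nx, nu))
  (Rm : 'M[R]_nu) (P : 'M[R]_nx) : 'M[R]_(nu, nx) :=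
  - (invmx (Rm + B^T *m P *m B) *m B^T *m P *m A).

Definition gainF (R : realType) (nx nu nw : nat) (B : 'M[R]_(nx, nu)) (E : 'M[R]_(nx, nw))
  (Rm : 'M[R]_nu) (P : 'M[R]_nx) (G : 'M[R]_(nx, nw)) : 'M[R]_(nu, nw) :=
  - (invmx (Rm + B^T *m P *m B) *m B^T *m (P *m E + G)).

Definition limsup_set (T : Type) (Ev : nat -> set T) : set T :=
  \bigcap_(n in [set: nat]) \bigcup_(k in [set k | (n <= k)%N]) Ev k.

(* Both trajectories are driven by the same disturbances, and the stationary
   control is almost surely K Xb_k + F E[W], because (Xb_k, Ub_k) has the law
   of (X_oo, K X_oo + F E[W]).  Hence the difference e_k = X_k - Xb_k follows
   the noise-free recursion e_(k+1) = (A + B K) e_k, and the control difference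
   is K e_k.  Schur stability of A + B K gives entrywise bounds c r^k, r < 1,
   on its powers, so |(e_k, K e_k)|^2 <= C r^(2k) |X_ini - Xb_0|^2 pathwise.
   Integrating yields the L^2 bound; pathwise convergence to 0 yields the
   limsup statement. *)

From mathcomp Require Import all_boot all_order all_algebra.
From mathcomp Require Import all_classical all_reals all_analysis.
From mathcomp Require Import complex measurable_realfun ring lra.

Set Implicit Arguments.
Unset Strict Implicit.
Unset Printing Implicit Defensive.

Import Order.TTheory GRing.Theory Num.Theory numFieldNormedType.Exports.
Import ComplexField.Normc.
Local Open Scope classical_set_scope.
Local Open Scope ring_scope.

Lemma ler_sum_term (R : numDomainType) (I : finType) (F : I -> R) (i : I) :
  (forall j, 0 <= F j) -> F i <= \sum_j F j.
Proof. by move=> F0; rewrite (bigD1 i) //= lerDl sumr_ge0. Qed.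

Lemma exists_ub_fin (R : realDomainType) (I : finType) (F : I -> R) :
  exists a, forall i, F i <= a.
Proof.
exists (\sum_i `|F i|) => i.
exact: le_trans (ler_norm _) (ler_sum_term i (fun j => normr_ge0 (F j))).
Qed.

Section SchurStability.
Variable R : realType.

Lemma normc_ge0 (x : R[i]) : 0 <= normc x.
Proof. by case: x => a b; rewrite /normc sqrtr_ge0. Qed.

(* Writing [V' := (M - l) V], one has [M^(k+1) V = l M^k V + M^k V'], so the
   bound [c' r^k] on [M^k V'] propagates to [M^k V] with the constant
   [|V i j| + c' / (r - |l|)]. *)
Lemma horner_prod_XsubC_pow_bound m (M : 'M[R[i]]_m.+1) (r : R) (s : seq R[i])
    (V : 'M[R[i]]_m.+1) :
  0 <= r -> (forall z, z \in s -> normc z < r) ->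
  horner_mx M (\prod_(z <- s) ('X - z%:P)) *m V = 0 ->
  forall i j, exists c : R, forall k, normc ((M ^+ k *m V) i j) <= c * r ^+ k.
Proof.
move=> r0; elim: s V => [|l s IH] V hs hV i j.
  exists 0 => k; rewrite big_nil rmorph1 mul1mx in hV.
  by rewrite hV mulmx0 mxE normc0 mul0r.
have hl : normc l < r by apply: hs; rewrite inE eqxx.
have Ml : M - l%:M = horner_mx M ('X - l%:P).
  by rewrite rmorphB /= horner_mx_X horner_mx_C.
set V' := (M - l%:M) *m V.
have hV' : horner_mx M (\prod_(z <- s) ('X - z%:P)) *m V' = 0.
  rewrite /V' Ml mulmxA -{}hV; congr (_ *m _).
  by rewrite big_cons mulrC rmorphM.
have [c' hc'] : exists c' : R, forall k, normc ((M ^+ k *m V') i j) <= c' * r ^+ k.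
  by apply: IH hV' i j => z hz; apply: hs; rewrite inE hz orbT.
have c'0 : 0 <= c'.
  by have := hc' 0%N; rewrite expr0 mulr1; apply: le_trans; exact: normc_ge0.
have rl : 0 < r - normc l by rewrite subr_gt0.
set a := normc (V i j) + c' / (r - normc l).
exists a; elim=> [|k IHk].
  by rewrite expr0 mulr1 mul1mx /a lerDl divr_ge0 // ltW.
have -> : (M ^+ k.+1 *m V) i j = l * (M ^+ k *m V) i j + (M ^+ k *m V') i j.
  have -> : M ^+ k *m V' = M ^+ k.+1 *m V - l *: (M ^+ k *m V).
    by rewrite /V' mulmxBl mulmxBr mulmxA mul_scalar_mx scalemxAr exprSr.
  by rewrite !mxE; ring.
apply: (le_trans (le_normcD _ _)); rewrite normcM.
apply: (@le_trans _ _ (normc l * (a * r ^+ k) + c' * r ^+ k)).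
  by apply: lerD => //; apply: ler_wpM2l => //; exact: normc_ge0.
have key : normc l * a + c' <= a * r.
  have h1 : (r - normc l) * (c' / (r - normc l)) = c'.
    by rewrite mulrC -mulrA mulVf ?gt_eqF // mulr1.
  have h2 := normc_ge0 (V i j).
  rewrite /a; nra.
have rk : 0 <= r ^+ k := exprn_ge0 _ r0.
rewrite exprS; nra.
Qed.

Lemma normc_lt_radius (s : seq R[i]) : (forall z, z \in s -> normc z < 1) ->
  exists2 r : R, 0 <= r < 1 & forall z, z \in s -> normc z < r.
Proof.
elim: s => [|z s IH] hs; first by exists 0; rewrite ?lexx ?ltr01.
have [|r /andP [r0 r1] hr] := IH; first by move=> x hx; apply: hs; rewrite inE hx orbT.
have hz : normc z < 1 by apply: hs; rewrite inE eqxx.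
have hz0 := normc_ge0 z.
exists (Num.max r ((1 + normc z) / 2)).
  by rewrite le_max r0 /= gt_max r1 /=; lra.
move=> x; rewrite inE => /orP [/eqP ->|hx]; rewrite lt_max.
  by apply/orP; right; lra.
by rewrite hr.
Qed.

(* The characteristic polynomial splits over [R[i]] with roots of modulus
   [< r < 1], and annihilates [M] by Cayley-Hamilton. *)
Lemma schur_stable_pow_bound n (M : 'M[R]_n) : schur_stable M ->
  exists c r : R, 0 <= r < 1 /\ forall k i j, `|(M ^+ k) i j| <= c * r ^+ k.
Proof.
case: n M => [|m] M hM; first by exists 0, 0; rewrite lexx ltr01; split => // k [].
set Mc := map_mx (real_complex R) M.
have [s hp] := closed_field_poly_normal (char_poly Mc).
rewrite (monicP (char_poly_monic Mc)) scale1r in hp.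
have hs1 : forall z, z \in s -> normc z < 1.
  move=> z hz; have : eigenvalue Mc z by rewrite eigenvalue_root_char hp root_prod_XsubC.
  by move/hM; case: z {hz} => a b; rewrite normc_def ltcE /= => /andP [_].
have [r /andP [r0 r1] hr] := normc_lt_radius hs1.
have hV : horner_mx Mc (\prod_(z <- s) ('X - z%:P)) *m 1%:M = 0.
  by rewrite -hp Cayley_Hamilton mul0mx.
have hpow k : Mc ^+ k = map_mx (real_complex R) (M ^+ k).
  elim: k => [|k IH]; first by rewrite !expr0 /Mc -[1]/(1%:M) map_mx1.
  by rewrite !exprS IH /Mc map_mxM.
have hentry (ij : 'I_m.+1 * 'I_m.+1) : exists c : R, forall k,
    `|(M ^+ k) ij.1 ij.2| <= c * r ^+ k.
  have [c hc] := horner_prod_XsubC_pow_bound r0 hr hV ij.1 ij.2.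
  exists c => k; have := hc k.
  by rewrite mulmx1 hpow mxE /normc /= expr0n addr0 sqrtr_sqr.
have [f hf] := choice hentry.
have [a ha] := exists_ub_fin f.
exists a, r; split; first by rewrite r0 r1.
move=> k i j; apply: le_trans (hf (i, j) k) _.
by rewrite ler_wpM2r ?exprn_ge0.
Qed.

End SchurStability.

Section SquaredNorm.
Variable R : realType.

Lemma sqnormE n (v : 'cV[R]_n) : sqnorm v = \sum_i v i ord0 ^+ 2.
Proof. by rewrite /sqnorm mxE; apply: eq_bigr => i _; rewrite mxE. Qed.

Lemma sqnorm_ge0 n (v : 'cV[R]_n) : 0 <= sqnorm v.
Proof. by rewrite sqnormE sumr_ge0 // => i _; exact: sqr_ge0. Qed.

Lemma sqnorm_eq0 n (v : 'cV[R]_n) : (sqnorm v == 0) = (v == 0).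
Proof.
apply/idP/eqP => [|->]; last by rewrite sqnormE big1 // => i _; rewrite mxE expr0n.
rewrite sqnormE psumr_eq0 => [/allP h|i _]; last exact: sqr_ge0.
apply/matrixP => i j; rewrite (ord1 j) mxE.
by have := h i (mem_index_enum i); rewrite sqrf_eq0 => /eqP.
Qed.

Lemma sqnorm_col_mx m n (a : 'cV[R]_m) (b : 'cV[R]_n) :
  sqnorm (col_mx a b) = sqnorm a + sqnorm b.
Proof.
rewrite !sqnormE big_split_ord /=.
by congr (_ + _); apply: eq_bigr => i _; rewrite ?col_mxEu ?col_mxEd.
Qed.

Lemma sqnormB_le n (a b : 'cV[R]_n) : sqnorm (a - b) <= 2 * sqnorm a + 2 * sqnorm b.
Proof.
rewrite !sqnormE !mulr_sumr -big_split /=; apply: ler_sum => i _.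
by rewrite !mxE; have := sqr_ge0 (a i ord0 + b i ord0); nra.
Qed.

Lemma normr_coord_le n (v : 'cV[R]_n) i : `|v i ord0| <= Num.sqrt (sqnorm v).
Proof.
rewrite -(sqrtr_sqr (v i ord0)) ler_sqrt ?sqnorm_ge0 // sqnormE.
exact: (ler_sum_term i (fun j => sqr_ge0 (v j ord0))).
Qed.

Lemma sqnorm_mulmx_le m n (M : 'M[R]_(m, n)) (a : R) (v : 'cV[R]_n) :
  (forall i j, `|M i j| <= a) ->
  sqnorm (M *m v) <= (m * n ^ 2)%:R * a ^+ 2 * sqnorm v.
Proof.
move=> hM; set s := Num.sqrt (sqnorm v).
have hs2 : s ^+ 2 = sqnorm v by rewrite sqr_sqrtr ?sqnorm_ge0.
have hi i : `|(M *m v) i ord0| <= n%:R * a * s.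
  rewrite mxE; apply: (le_trans (ler_norm_sum _ _ _)).
  apply: (@le_trans _ _ (\sum_(j < n) a * s)).
    apply: ler_sum => j _; rewrite normrM.
    by apply: ler_pM => //; exact: normr_coord_le.
  by rewrite sumr_const card_ord -mulrA mulr_natl.
rewrite sqnormE; apply: (@le_trans _ _ (\sum_(i < m) (n%:R * a * s) ^+ 2)).
  apply: ler_sum => i _; rewrite -real_normK ?num_real //.
  by have := hi i; have := normr_ge0 ((M *m v) i ord0); nra.
by rewrite sumr_const card_ord -mulr_natl natrM natrX -hs2; lra.
Qed.

Lemma sqnorm_feedback_pow_le m n (M : 'M[R]_m) (K : 'M[R]_(n, m)) (c r : R) :
  (forall k i j, `|(M ^+ k) i j| <= c * r ^+ k) ->
  exists2 C : R, 0 <= C & forall k v,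
    sqnorm (col_mx (M ^+ k *m v) (K *m (M ^+ k *m v))) <= C * (r ^+ k) ^+ 2 * sqnorm v.
Proof.
move=> hM; have [a ha] := exists_ub_fin (fun ij : 'I_n * 'I_m => `|K ij.1 ij.2|).
pose CK : R := (n * m ^ 2)%:R * a ^+ 2.
pose CM : R := (m * m ^ 2)%:R * c ^+ 2.
have CK0 : 0 <= CK by rewrite mulr_ge0 ?sqr_ge0.
have CM0 : 0 <= CM by rewrite mulr_ge0 ?sqr_ge0.
exists ((1 + CK) * CM); first by rewrite mulr_ge0 // addr_ge0.
move=> k v; rewrite sqnorm_col_mx; set w := M ^+ k *m v.
have hw : sqnorm w <= CM * (r ^+ k) ^+ 2 * sqnorm v.
  by apply: le_trans (sqnorm_mulmx_le v (hM k)) _; rewrite /CM exprMn; lra.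
have hKw : sqnorm (K *m w) <= CK * sqnorm w.
  exact: sqnorm_mulmx_le (fun i j => ha (i, j)).
have := sqnorm_ge0 w; have := sqnorm_ge0 v; have := sqr_ge0 (r ^+ k).
nra.
Qed.

End SquaredNorm.

Section EntrywiseMeasurability.
Context d (T : measurableType d) (R : realType).

Definition measurable_cV n (Y : T -> 'cV[R]_n) : Prop :=
  forall i, measurable_fun setT (fun t => Y t i ord0).

Lemma rv_meas_measurable_cV n (Y : T -> 'cV[R]_n) : rv_meas Y -> measurable_cV Y.
Proof.
move=> hY i _ B mB; rewrite setTI.
pose S := [set v : 'cV[R]_n | forall j, (if j == i then B else setT) (v j ord0)].
have hS : borel_cV S.
  apply: sub_gen_smallest; exists (fun j => if j == i then B else setT).
  by split => // j; case: (j == i).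
have := hY S hS; congr measurable; apply/seteqP; split => t /=.
  by move=> /(_ i); rewrite eqxx.
by move=> hB j; case: eqP => [->|].
Qed.

Lemma measurable_cV_cst n (c : 'cV[R]_n) : measurable_cV (fun=> c).
Proof. by move=> i; exact: measurable_cst. Qed.

Lemma measurable_cV_add n (Y Z : T -> 'cV[R]_n) :
  measurable_cV Y -> measurable_cV Z -> measurable_cV (fun t => Y t + Z t).
Proof.
move=> hY hZ i; under eq_fun do rewrite mxE.
exact: measurable_funD.
Qed.

Lemma measurable_cV_sub n (Y Z : T -> 'cV[R]_n) :
  measurable_cV Y -> measurable_cV Z -> measurable_cV (fun t => Y t - Z t).
Proof.
move=> hY hZ i; under eq_fun do rewrite !mxE.
exact: measurable_funB.
Qed.

Lemma measurable_cV_mulmx m n (M : 'M[R]_(m, n)) (Y : T -> 'cV[R]_n) :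
  measurable_cV Y -> measurable_cV (fun t => M *m Y t).
Proof.
move=> hY i; under eq_fun do rewrite mxE.
by apply: measurable_sum => j; apply: measurable_funM => //; exact: measurable_cst.
Qed.

Lemma measurable_cV_col_mx m n (Y : T -> 'cV[R]_m) (Z : T -> 'cV[R]_n) :
  measurable_cV Y -> measurable_cV Z -> measurable_cV (fun t => col_mx (Y t) (Z t)).
Proof.
move=> hY hZ i; rewrite -(splitK i); case: (fintype.split i) => j /=.
  by under eq_fun do rewrite col_mxEu; exact: hY.
by under eq_fun do rewrite col_mxEd; exact: hZ.
Qed.

Lemma measurable_fun_sqnorm n (Y : T -> 'cV[R]_n) :
  measurable_cV Y -> measurable_fun setT (fun t => sqnorm (Y t)).
Proof.
move=> hY; under eq_fun do rewrite sqnormE.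
by apply: measurable_sum => j; under eq_fun do rewrite expr2; exact: measurable_funM.
Qed.

Lemma measurable_cV_eq n (Y Z : T -> 'cV[R]_n) :
  measurable_cV Y -> measurable_cV Z -> measurable [set t | Y t = Z t].
Proof.
move=> hY hZ.
have := measurable_fun_sqnorm (measurable_cV_sub hY hZ) measurableT (measurable_set1 0).
rewrite setTI; congr measurable; apply/seteqP; split => t /=.
  by move/eqP; rewrite sqnorm_eq0 subr_eq0 => /eqP.
by move=> ->; apply/eqP; rewrite sqnorm_eq0 subrr.
Qed.

Lemma integrable_sqnorm (mu : probability T R) n (Y : T -> 'cV[R]_n) :
  sq_int mu Y -> mu.-integrable setT (fun t => (sqnorm (Y t))%:E).
Proof.
move=> [_ hY]; under eq_fun do rewrite sqnormE -sumEFin.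
exact: integrable_sum.
Qed.

Lemma integrable_sqnormB (mu : probability T R) n (Y Z : T -> 'cV[R]_n) :
  sq_int mu Y -> sq_int mu Z -> mu.-integrable setT (fun t => (sqnorm (Y t - Z t))%:E).
Proof.
move=> hY hZ.
have mYZ := measurable_cV_sub (rv_meas_measurable_cV hY.1) (rv_meas_measurable_cV hZ.1).
apply: (le_integrable measurableT _ _ (integrableD measurableT
  (integrableZl measurableT 2 (integrable_sqnorm hY))
  (integrableZl measurableT 2 (integrable_sqnorm hZ)))).
  exact/measurable_EFinP/measurable_fun_sqnorm.
move=> t _ /=; have Y0 := sqnorm_ge0 (Y t); have Z0 := sqnorm_ge0 (Z t).
by rewrite lee_fin !ger0_norm ?sqnorm_ge0 ?sqnormB_le //; lra.
Qed.

End EntrywiseMeasurability.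

(* ['cV_n] with [borel_cV] as its measurable sets, so that the lemmas above
   apply to functions defined on the state space itself. *)
Definition borel_cV_type (R : realType) n : Type := g_sigma_algebraType (@rect_cV R n).

Lemma borel_cV_feedback_graph (R : realType) m n (K : 'M[R]_(n, m)) (c : 'cV[R]_n) :
  borel_cV [set v : 'cV[R]_(m + n) | dsubmx v = K *m usubmx v + c].
Proof.
have hid : measurable_cV (fun v : borel_cV_type R (m + n) => v : 'cV[R]_(m + n)).
  by apply: rv_meas_measurable_cV => S hS; rewrite preimage_id.
have hu : measurable_cV (fun v : borel_cV_type R (m + n) => usubmx v).
  by move=> i; under eq_fun do rewrite mxE; exact: hid.
have hd : measurable_cV (fun v : borel_cV_type R (m + n) => dsubmx v).
  by move=> i; under eq_fun do rewrite mxE; exact: hid.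
exact (measurable_cV_eq hd (measurable_cV_add (measurable_cV_mulmx K hu) (measurable_cV_cst c))).
Qed.

Section AlmostSure.
Context d (T : measurableType d) (R : realType).

Lemma same_law_feedback_ae d' (T' : measurableType d') (P : probability T R)
    (P' : probability T' R) m n (X : T -> 'cV[R]_m) (U : T -> 'cV[R]_n)
    (Y : T' -> 'cV[R]_m) (K : 'M[R]_(n, m)) (c : 'cV[R]_n) :
  measurable_cV X -> measurable_cV U ->
  same_law P P' (fun t => col_mx (X t) (U t)) (fun t => col_mx (Y t) (K *m Y t + c)) ->
  \forall t \ae P, U t = K *m X t + c.
Proof.
move=> mX mU hlaw; set N := [set t | U t = K *m X t + c].
have mN : measurable N.
  exact: measurable_cV_eq mU (measurable_cV_add (measurable_cV_mulmx K mX) (measurable_cV_cst c)).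
have PN : P N = 1%E.
  have -> : N = (fun t => col_mx (X t) (U t)) @^-1`
      [set v | dsubmx v = K *m usubmx v + c].
    by apply/seteqP; split => t /=; rewrite col_mxKu col_mxKd.
  rewrite hlaw; last exact: borel_cV_feedback_graph.
  rewrite (_ : _ @^-1` _ = setT) ?probability_setT //.
  by apply/seteqP; split => t //= _; rewrite col_mxKu col_mxKd.
exists (~` N); split => //; first exact: measurableC.
by rewrite probability_setC // PN subee.
Qed.

Lemma integral_le_geometric (mu : {measure set T -> \bar R}) (f : nat -> T -> R)
    (h : T -> R) (C r : R) :
  0 <= C -> (forall k, measurable_fun setT (f k)) -> (forall k t, 0 <= f k t) ->
  mu.-integrable setT (EFin \o h) -> (forall t, 0 <= h t) ->
  (\forall t \ae mu, forall k, f k t <= C * (r ^+ k) ^+ 2 * h t) ->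
  exists2 beta : R, 0 < beta &
    forall k, (\int[mu]_t (f k t)%:E <= ((beta * r ^+ k) ^+ 2)%:E)%E.
Proof.
move=> C0 mf f0 ih h0 hae.
have mh : measurable_fun setT h by apply/measurable_EFinP; exact: measurable_int ih.
pose I := fine (\int[mu]_t (h t)%:E).
have IE : (\int[mu]_t (h t)%:E)%E = I%:E by rewrite fineK // integrable_fin_num.
have I0 : 0 <= I by apply: fine_ge0; apply: integral_ge0 => t _; rewrite lee_fin.
have CI0 := mulr_ge0 C0 I0.
exists (Num.sqrt (C * I + 1)); first by rewrite sqrtr_gt0; lra.
move=> k; have rk0 := sqr_ge0 (r ^+ k).
apply: (@le_trans _ _ (\int[mu]_t ((C * (r ^+ k) ^+ 2)%:E * (h t)%:E))%E).
  apply: ae_ge0_le_integral => //.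
  - by move=> t _; rewrite lee_fin.
  - exact/measurable_EFinP.
  - by move=> t _; rewrite -EFinM lee_fin; apply: mulr_ge0 => //; exact: mulr_ge0.
  - exact/measurable_funeM/measurable_EFinP.
  - by apply: filterS hae => t hf _; rewrite -EFinM lee_fin.
rewrite ge0_integralZl_EFin //; last by rewrite mulr_ge0.
- rewrite IE -EFinM lee_fin exprMn sqr_sqrtr; nra.
- by move=> t _; rewrite lee_fin.
- exact/measurable_EFinP.
Qed.

Lemma limsup_set_ge_null (mu : {measure set T -> \bar R}) (g : nat -> T -> R) (eps : R) :
  0 < eps -> (forall k, measurable_fun setT (g k)) ->
  (\forall t \ae mu, g ^~ t @ \oo --> 0) ->
  mu (limsup_set (fun k => [set t | eps <= g k t])) = 0%E.
Proof.
move=> eps0 mg [N [mN N0 sN]].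
apply/eqP; rewrite eq_le measure_ge0 andbT -N0 le_measure ?inE //.
  apply: bigcapT_measurable => n; apply: bigcup_measurable => k _.
  by rewrite -[X in measurable X]setTI; exact: measurable_fun_le (measurable_cst eps) (mg k).
move=> t hL; apply: sN => /= hcvg.
have [n _ hn] := cvgr_lt _ hcvg _ eps0.
have [k nk hk] := hL n I.
by have := hn k nk; rewrite ltNge hk.
Qed.

End AlmostSure.

Section ClosedLoop.
Variables (R : realType) (nx nu nw : nat).
Variables (A : 'M[R]_nx) (B : 'M[R]_(nx, nu)) (K : 'M[R]_(nu, nx)) (c : 'cV[R]_nu).

Lemma feedback_error_pow (x y e : nat -> 'cV[R]_nx) (u v : nat -> 'cV[R]_nu) :
  (forall k, u k = K *m x k + c) -> (forall k, v k = K *m y k + c) ->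
  (forall k, x k.+1 = A *m x k + B *m u k + e k) ->
  (forall k, y k.+1 = A *m y k + B *m v k + e k) ->
  forall k, let z := (A + B *m K) ^+ k *m (x 0%N - y 0%N) in
    col_mx (x k - y k) (u k - v k) = col_mx z (K *m z).
Proof.
move=> hu hv hx hy.
have hdu k : u k - v k = K *m (x k - y k).
  by rewrite hu hv mulmxBr [K *m y k + c]addrC addrKA.
have hdx k : x k - y k = (A + B *m K) ^+ k *m (x 0%N - y 0%N).
  elim: k => [|k IH]; first by rewrite expr0 mul1mx.
  rewrite hx hy hu hv exprS -mulmxA -IH mulmxBr !mulmxDl !mulmxDr -!mulmxA.
  rewrite [A *m y k + _ + e k]addrC addrKA !addrA.
  by rewrite [A *m y k + _ + _]addrC addrKA.
by move=> k z; rewrite /z hdu hdx.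
Qed.

Context d (T : measurableType d) (E : 'M[R]_(nx, nw)).

Lemma measurable_cV_closed_loop (X : nat -> T -> 'cV[R]_nx) (U : nat -> T -> 'cV[R]_nu)
    (W : nat -> T -> 'cV[R]_nw) :
  (forall k t, U k t = K *m X k t + c) ->
  (forall k t, X k.+1 t = A *m X k t + B *m U k t + E *m W k t) ->
  measurable_cV (X 0%N) -> (forall k, measurable_cV (W k)) ->
  forall k, measurable_cV (X k) /\ measurable_cV (U k).
Proof.
move=> hU hX mX0 mW.
have mU k : measurable_cV (X k) -> measurable_cV (U k).
  move=> mXk; rewrite (funext (hU k)).
  exact: measurable_cV_add (measurable_cV_mulmx K mXk) (measurable_cV_cst c).
elim=> [|k [mXk mUk]]; first by split; last exact: mU.
have mXk1 : measurable_cV (X k.+1).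
  rewrite (funext (hX k)); apply: measurable_cV_add (measurable_cV_mulmx E (mW k)).
  exact: measurable_cV_add (measurable_cV_mulmx A mXk) (measurable_cV_mulmx B mUk).
by split; last exact: mU.
Qed.

End ClosedLoop.

Lemma sqrt_geometric_cvg0 (R : realType) (u : nat -> R) (a r : R) : `|r| < 1 ->
  (forall k, 0 <= u k <= a * (r ^+ k) ^+ 2) -> Num.sqrt (u k) @[k --> \oo] --> 0.
Proof.
move=> r1 hu.
have hr2 : `|r ^+ 2| < 1 by rewrite normrX exprn_ilt1.
have hb : a * (r ^+ k) ^+ 2 @[k --> \oo] --> 0.
  have -> : (fun k => a * (r ^+ k) ^+ 2) = (fun k => (r ^+ 2) ^+ k * a).
    by apply: funext => k; rewrite -exprM mulnC exprM mulrC.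
  by rewrite -(mul0r a); apply: cvgMr_tmp; exact: cvg_expr.
have u0 : u k @[k --> \oo] --> 0.
  by apply: (squeeze_cvgr _ (cvg_cst 0) hb); exact: nearW.
by rewrite -sqrtr0; apply: continuous_cvg => //; exact: sqrt_continuous.
Qed.

Theorem lemma5
  (R : realType) (nx nu nw : nat)
  (A : 'M[R]_nx) (B : 'M[R]_(nx, nu)) (E : 'M[R]_(nx, nw))
  (Q : 'M[R]_nx) (Rm : 'M[R]_nu) (Qh : 'M[R]_nx)
  (Pr : 'M[R]_nx) (G : 'M[R]_(nx, nw))
  (* standing assumptions *)
  (hQ : psd Q) (hRm : pd Rm) (hAB : stabilizable A B)
  (hQh : psd Qh) (hQhQ : Qh *m Qh = Q) (hAQ : detectable A Qh)
  (* Pr: the stabilizing positive semidefinite solution of the DARE *)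
  (hPr_psd : psd Pr)
  (hPr_dare : Pr = Q + A^T *m (Pr - Pr *m B *m invmx (Rm + B^T *m Pr *m B)
                                    *m B^T *m Pr) *m A)
  (hPr_stab : schur_stable (A + B *m gainK A B Rm Pr))
  (* G: solution of G = Atilde^T (Pr E + G) *)
  (hG : G = (A + B *m gainK A B Rm Pr)^T *m (Pr *m E + G))
  (* probability space, initial state and disturbances *)
  (d : measure_display) (T : measurableType d) (P : probability T R)
  (Xini : T -> 'cV[R]_nx) (W : nat -> T -> 'cV[R]_nw)
  (hXini : sq_int P Xini)
  (hW : forall k, sq_int P (W k))
  (hWid : forall k, same_law P P (W k) (W 0%N))
  (hWind : mutually_indep P (fun o : option nat =>
             match o with None => sigma_rv Xini | Some k => sigma_rv (W k) end))
  (* closed-loop trajectory under U = K X + F E[W] *)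
  (Xd : nat -> T -> 'cV[R]_nx) (Ud : nat -> T -> 'cV[R]_nu)
  (hXd0 : Xd 0%N = Xini)
  (hUd : forall k t, Ud k t = gainK A B Rm Pr *m Xd k t
                               + gainF B E Rm Pr G *m mean P (W 0%N))
  (hXd : forall k t, Xd k.+1 t = A *m Xd k t + B *m Ud k t + E *m W k t)
  (* corresponding stationary trajectory *)
  (Xb : nat -> T -> 'cV[R]_nx) (Ub : nat -> T -> 'cV[R]_nu)
  (hXb : forall k t, Xb k.+1 t = A *m Xb k t + B *m Ub k t + E *m W k t)
  (hXbsq : forall k, sq_int P (Xb k))
  (hUbsq : forall k, sq_int P (Ub k))
  (hstat :
     let K := gainK A B Rm Pr in
     let F := gainF B E Rm Pr G in
     let At : 'M[R]_nx := A + B *m K in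
     let Ft : 'M[R]_(nx, nw) := B *m F + E in
     let EW := mean P (W 0%N) in
     exists (d' : measure_display) (T' : measurableType d')
            (P' : probability T' R) (W' : nat -> T' -> 'cV[R]_nw)
            (Xinf : T' -> 'cV[R]_nx),
       (forall j, sq_int P' (W' j)) /\
       (forall j, same_law P' P (W' j) (W 0%N)) /\
       mutually_indep P' (fun j : nat => sigma_rv (W' j)) /\
       {ae P', forall t, forall i,
          ((fun n : nat => ((invmx (1%:M - At) *m Ft *m EW
              + \sum_(j < n) At ^+ j *m E *m (W' j t - EW)) i ord0 : R))
          @ \oo --> Xinf t i ord0)} /\
       forall k, same_law P P'
         (fun t => col_mx (Xb k t) (Ub k t))
         (fun t => col_mx (Xinf t) (K *m Xinf t + F *m EW))) :
  (exists beta p : R, 0 < beta /\ 0 <= p < 1 /\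
     forall k : nat,
       (\int[P]_t (sqnorm (col_mx (Xd k t - Xb k t) (Ud k t - Ub k t)))%:E
          <= ((beta * p ^+ k) ^+ 2)%:E)%E) /\
  (forall eps : R, 0 < eps ->
     P (limsup_set (fun k => [set t | eps <= Num.sqrt
          (sqnorm (col_mx (Xd k t - Xb k t) (Ud k t - Ub k t)))])) = 0%E).
Proof.
have [d' [T' [P' [W' [Xinf [_ [_ [_ [_ hlaw]]]]]]]]] := hstat.
set K := gainK A B Rm Pr; set c := gainF B E Rm Pr G *m mean P (W 0%N).
have mW k := rv_meas_measurable_cV (hW k).1.
have mXb k := rv_meas_measurable_cV (hXbsq k).1.
have mUb k := rv_meas_measurable_cV (hUbsq k).1.
have mX0 : measurable_cV (Xd 0%N) by rewrite hXd0; exact: rv_meas_measurable_cV hXini.1.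
have mXU := measurable_cV_closed_loop hUd hXd mX0 mW.
pose e k t := col_mx (Xd k t - Xb k t) (Ud k t - Ub k t).
have me k : measurable_fun setT (fun t => sqnorm (e k t)).
  apply/measurable_fun_sqnorm/measurable_cV_col_mx.
    exact: measurable_cV_sub (mXU k).1 (mXb k).
  exact: measurable_cV_sub (mXU k).2 (mUb k).
have [c0 [r [/andP [r0 r1] hM]]] := schur_stable_pow_bound hPr_stab.
have [C C0 hC] := sqnorm_feedback_pow_le K hM.
have hbound : \forall t \ae P, forall k,
    sqnorm (e k t) <= C * (r ^+ k) ^+ 2 * sqnorm (Xini t - Xb 0%N t).
  apply: filterS (ae_foralln (fun k => same_law_feedback_ae (mXb k) (mUb k) (hlaw k))).
  move=> t hUb k; rewrite /e (feedback_error_pow (x := Xd ^~ t) (y := Xb ^~ t)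
    (hUd ^~ t) hUb (hXd ^~ t) (hXb ^~ t)) -hXd0; exact: hC.
split.
  have [beta beta0 hint] := integral_le_geometric C0 me (fun k t => sqnorm_ge0 _)
    (integrable_sqnormB hXini (hXbsq 0%N)) (fun t => sqnorm_ge0 _) hbound.
  by exists beta, r; rewrite r0 r1.
move=> eps eps0; apply: limsup_set_ge_null eps0 _ _ => [k|].
  exact: measurableT_comp (continuous_measurable_fun (@sqrt_continuous R)) (me k).
apply: filterS hbound => t hb.
apply: (sqrt_geometric_cvg0 (a := C * sqnorm (Xini t - Xb 0%N t)) (r := r)).
  by rewrite ger0_norm.
by move=> k; rewrite sqnorm_ge0 /= mulrAC; exact: hb.
Qed.
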